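(* Let $G$ be a bipartite graph between a hidden set $U$ with $|U|=n$ and an observed set $V$, with edge weights $w(u,v)\in\{-1,+1\}$. For $v\in V$ let $B(v)\subseteq U$ be its set of neighbours and $B^+(v)=\{u\in B(v): w(u,v)=+1\}$. Assume $|B(v)|\le d$ for all $v\in V$. Let $k=\rho n$ be a positive integer, let $S$ be a uniformly random $k$-subset of $U$, $h$ its indicator vector, and $y_v=\operatorname{sgn}\big(\sum_{u\in B(v)}w(u,v)h_u\big)$ for $v\in V$. Let $u\neq v$ in $V$. (a) If $B^+(u)\cap B^+(v)\ne\emptyset$ and $2\rho d\le 0.1$, then $\Pr[y_u=y_v=1]\ge 0.9\rho$. (b) If $B^+(u)\cap B^+(v)=\emptyset$, then $\Pr[y_u=y_v=1]\le \rho^2|B^+(u)|\,|B^+(v)|\le(\rho d)^2$.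
   Context: $\operatorname{sgn}(x)=1$ if $x>0$ and $0$ otherwise. Two observed nodes $u,v$ are called related if they have a common hidden neighbour joined to both by $+1$ edges, i.e. $B^+(u)\cap B^+(v)\neq\emptyset$. *)

From HB Require Import structures.
From mathcomp Require Import all_boot all_order all_algebra.
Set Implicit Arguments. Unset Strict Implicit. Unset Printing Implicit Defensive.
Import Order.TTheory GRing.Theory Num.Theory.
Local Open Scope ring_scope.

Definition Bplus (n : nat) (V : finType) (B : V -> {set 'I_n})
  (w : 'I_n -> V -> int) (v : V) : {set 'I_n} :=
  [set u in B v | w u v == 1].

Definition sgn (x : int) : int := if 0 < x then 1 else 0.

Definition indic (n : nat) (S : {set 'I_n}) (u : 'I_n) : int := (u \in S)%:R.

Definition yv (n : nat) (V : finType) (B : V -> {set 'I_n})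
  (w : 'I_n -> V -> int) (S : {set 'I_n}) (v : V) : int :=
  sgn (\sum_(u in B v) w u v * indic S u).

Definition probk (n k : nat) (E : {set 'I_n} -> bool) : rat :=
  (#|[set S : {set 'I_n} | (#|S| == k) && E S]|%:R) / ('C(n, k))%:R.

From HB Require Import structures.
From mathcomp Require Import all_boot all_order all_algebra.
From mathcomp Require Import ring lra.
Import Order.TTheory GRing.Theory Num.Theory.
Local Open Scope ring_scope.
Set Implicit Arguments. Unset Strict Implicit.

(* Everything rests on two facts about a uniformly random k-subset S of an
   n-set (rho = k/n): a fixed point lies in S with probability exactly rho,
   and two fixed distinct points both lie in S with probability
   k(k-1)/(n(n-1)) <= rho^2.  Both are instances of the counting identity
   #{S : X <= S, |S| = k} * n^_|X| = k^_|X| * C(n, k) (falling factorials),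
   proved first for an arbitrary finite type.  After the elementary
   monotonicity and union bounds for [probk], two facts about the threshold
   y_x = sgn(sum_b w(b,x) h_b) are proved: x fires when a +1 neighbour is
   the only neighbour of x in S, and a firing x has a +1 neighbour in S.
   (a) For a common +1 neighbour a of u and v, the event {a in S} is covered
       by {both fire} and the events {a, b in S} for the other neighbours b,
       so rho <= Pr + 2d rho^2 <= Pr + rho/10.
   (b) If B+(u), B+(v) are disjoint, {both fire} is covered by the events
       {a, c in S} with a in B+(u), c in B+(v), a <> c, whence the bound. *)

(* Both sides count the (j + m)-subsets of an N-set carrying an ordered list
   of m of their elements (listing the marks first, or the subset first);
   proved by induction on m, one factor at a time via [mul_bin_diag]. *)
Lemma mul_bin_ffact (N m j : nat) :
  ('C(N - m, j) * N ^_ m = (j + m) ^_ m * 'C(N, j + m))%N.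
Proof.
elim: m j => [|m IHm] j; first by rewrite subn0 addn0 ffactn0 muln1 mul1n.
have step : ((N - m) * 'C(N - m.+1, j) = j.+1 * 'C(N - m, j.+1))%N.
  by rewrite subnS mul_bin_diag.
rewrite -addSnnS ffactnSr ffactnSr addnK.
transitivity (j.+1 * ('C(N - m, j.+1) * N ^_ m))%N.
  by rewrite [RHS]mulnA -step; ring.
by rewrite IHm; ring.
Qed.

(* The k-supersets of X correspond to the (k - |X|)-subsets of its complement. *)
Lemma card_ksupersets_bin (T : finType) (X : {set T}) (k : nat) : (#|X| <= k)%N ->
  #|[set S : {set T} | (X \subset S) && (#|S| == k)]| = 'C(#|T| - #|X|, k - #|X|).
Proof.
move=> leXk.
have cardXC : #|~: X| = (#|T| - #|X|)%N by rewrite -(cardsC X) addKn.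
rewrite -cardXC -cards_draws; symmetry.
rewrite -(@card_in_imset _ _ (fun A => A :|: X)); last first.
  move=> A1 A2; rewrite !inE => /andP[sub1 _] /andP[sub2 _] eqU.
  have: (A1 :|: X) :\: X = (A2 :|: X) :\: X by rewrite eqU.
  rewrite !setDUl setDv !setU0.
  by move: sub1 sub2; rewrite -!disjoints_subset => /setDidPl -> /setDidPl ->.
apply: eq_card => S; rewrite inE; apply/imsetP/andP.
- move=> [A]; rewrite inE => /andP[sAXC /eqP cardA] ->; split; first exact: subsetUr.
  have disjAX : A :&: X = set0.
    by apply/eqP; rewrite setI_eq0 disjoints_subset.
  by rewrite cardsU disjAX cards0 subn0 cardA subnK.
- move=> [sXS /eqP cardS]; exists (S :\: X).
    by rewrite inE subsetDr cardsDS // cardS eqxx.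
  by rewrite setDE setUIl [~: X :|: X]setUC setUCr setIT; apply/esym/setUidPl.
Qed.

(* The counting identity behind all probabilities below; both sides vanish
   when k < |X|. *)
Lemma card_ksupersets (T : finType) (X : {set T}) (k : nat) :
  (#|[set S : {set T} | (X \subset S) && (#|S| == k)]| * #|T| ^_ #|X|
    = k ^_ #|X| * 'C(#|T|, k))%N.
Proof.
have [ltkX|leXk] := ltnP k #|X|; last first.
  by rewrite card_ksupersets_bin // -{2 3}(subnK leXk) mul_bin_ffact.
rewrite (ffact_small ltkX) mul0n; apply/eqP; rewrite muln_eq0 cards_eq0; apply/orP; left.
apply/eqP/setP => S; rewrite !inE; apply/negbTE/andP => -[/subset_leq_card leXS /eqP cardS].
by move: ltkX; rewrite -cardS ltnNge leXS.
Qed.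

Lemma card_bigcup_le (I T : finType) (P : pred I) (F : I -> {set T}) :
  (#|\bigcup_(i | P i) F i| <= \sum_(i | P i) #|F i|)%N.
Proof.
elim/big_rec2: _ => [|i x U _ IH]; first by rewrite cards0.
by apply: leq_trans (leq_card_setU _ _).1 _; rewrite leq_add2l.
Qed.

Lemma ler_nat_div (R : numFieldType) (a b c e : nat) :
  (0 < b)%N -> (0 < e)%N -> (a * e <= c * b)%N -> a%:R / b%:R <= c%:R / e%:R :> R.
Proof.
move=> b_gt0 e_gt0 cross.
by rewrite ler_pdivrMr ?ltr0n // mulrAC ler_pdivlMr ?ltr0n // -!natrM ler_nat.
Qed.

Section UniformKSubsets.

Variables n k : nat.

Local Notation Pr := (@probk n k).

Lemma eq_probk (E F : {set 'I_n} -> bool) : E =1 F -> Pr E = Pr F.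
Proof.
by move=> eqEF; rewrite /probk; congr (_%:R / _); apply: eq_card => S; rewrite !inE eqEF.
Qed.

Lemma probk_mono (E F : {set 'I_n} -> bool) :
  (forall S : {set 'I_n}, #|S| = k -> E S -> F S) -> Pr E <= Pr F.
Proof.
move=> EF; rewrite /probk; apply: ler_wpM2r; first by rewrite invr_ge0 ler0n.
rewrite ler_nat; apply/subset_leq_card/subsetP => S; rewrite !inE.
by case/andP => /eqP cardS ES; rewrite cardS eqxx EF.
Qed.

Lemma probk_or (E F : {set 'I_n} -> bool) :
  Pr (fun S => E S || F S) <= Pr E + Pr F.
Proof.
rewrite /probk -mulrDl; apply: ler_wpM2r; first by rewrite invr_ge0 ler0n.
rewrite -natrD ler_nat; apply: leq_trans (leq_card_setU _ _).1.
by apply/subset_leq_card/subsetP => S; rewrite !inE andb_orr.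
Qed.

Lemma probk_exists (I : finType) (A : {set I}) (E : I -> {set 'I_n} -> bool) :
  Pr (fun S => [exists i in A, E i S]) <= \sum_(i in A) Pr (E i).
Proof.
rewrite /probk -mulr_suml; apply: ler_wpM2r; first by rewrite invr_ge0 ler0n.
rewrite -natr_sum ler_nat; apply: leq_trans (card_bigcup_le _ _).
apply/subset_leq_card/subsetP => S; rewrite inE => /andP[cardS /exists_inP[i iA ES]].
by apply/bigcupP; exists i; rewrite // inE cardS.
Qed.

Hypothesis leqkn : (k <= n)%N.

Lemma probk_supersets (X : {set 'I_n}) :
  Pr (fun S => X \subset S) = (k ^_ #|X|)%:R / (n ^_ #|X|)%:R.
Proof.
have bin_gt0 : (0 < 'C(n, k))%N by rewrite bin_gt0.
have ffact_gt0 : (0 < n ^_ #|X|)%N.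
  by rewrite ffact_gt0 -[X in (_ <= X)%N]card_ord max_card.
apply/eqP; rewrite /probk eqr_div ?pnatr_eq0 -?lt0n // -!natrM eqr_nat.
have := card_ksupersets X k; rewrite card_ord => <-.
by apply/eqP; congr (_ * _)%N; apply: eq_card => S; rewrite !inE andbC.
Qed.

Lemma probk_mem (a : 'I_n) : Pr (fun S => a \in S) = k%:R / n%:R.
Proof.
rewrite (@eq_probk _ (fun S => [set a] \subset S)) => [|S]; last by rewrite sub1set.
by rewrite probk_supersets cards1 !ffactn1.
Qed.

Lemma probk_mem2 (a b : 'I_n) : a != b ->
  Pr (fun S => (a \in S) && (b \in S)) <= (k%:R / n%:R) ^+ 2.
Proof.
move=> neq_ab; have card_ab : #|[set a; b]| = 2 by rewrite cards2 neq_ab.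
have n_gt1 : (1 < n)%N by have := max_card [set a; b]; rewrite card_ab card_ord.
rewrite (@eq_probk _ (fun S => [set a; b] \subset S)) => [|S]; last first.
  by rewrite subUset !sub1set.
rewrite probk_supersets card_ab (ffactnS k) (ffactnS n) !ffactn1 expr_div_n -!natrX.
have shrink : ((k - 1) * n <= k * (n - 1))%N.
  by rewrite mulnBl mulnBr mul1n muln1 leq_sub2l.
apply: ler_nat_div; rewrite ?muln_gt0 ?expn_gt0 -?subn1 ?subn_gt0 ?(ltnW n_gt1) //.
have -> : (k * (k - 1) * n ^ 2 = (k * n) * ((k - 1) * n))%N by ring.
have -> : (k ^ 2 * (n * (n - 1)) = (k * n) * (k * (n - 1)))%N by ring.
by rewrite leq_mul2l shrink orbT.
Qed.

End UniformKSubsets.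

Section Thresholds.

Variables (n : nat) (V : finType) (B : V -> {set 'I_n}) (w : 'I_n -> V -> int).

Lemma card_Bplus (x : V) : (#|Bplus B w x| <= #|B x|)%N.
Proof. by apply/subset_leq_card/subsetP => b; rewrite inE => /andP[]. Qed.

Lemma yv_lone_positive (S : {set 'I_n}) (x : V) (a : 'I_n) :
  a \in Bplus B w x -> a \in S ->
  (forall b, b \in B x -> b != a -> b \notin S) -> yv B w S x = 1.
Proof.
rewrite inE => /andP[a_x /eqP w_a] a_S others.
rewrite /yv (bigD1 a) //= big1 => [|b /andP[b_x b_ne_a]]; last first.
  by rewrite /indic (negbTE (others b b_x b_ne_a)) mulr0.
by rewrite addr0 /indic a_S w_a mul1r.
Qed.

Hypothesis signed : forall (x : V) (b : 'I_n), b \in B x -> w b x = 1 \/ w b x = -1.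

Lemma yv_positive_witness (S : {set 'I_n}) (x : V) :
  yv B w S x = 1 -> exists2 b, b \in Bplus B w x & b \in S.
Proof.
rewrite /yv /sgn; case: ifP => // sum_pos _.
case: (boolP [exists b in Bplus B w x, b \in S]) => [/exists_inP //|].
rewrite negb_exists_in => /forall_inP no_witness.
have : \sum_(b in B x) w b x * indic S b <= \sum_(b in B x) 0.
  apply: ler_sum => b b_x; rewrite /indic.
  case b_S: (b \in S); last by rewrite mulr0.
  have : b \notin Bplus B w x by apply: contraL b_S; apply: no_witness.
  by rewrite inE b_x /=; case: (signed b_x) => ->.
by rewrite big1_eq leNgt sum_pos.
Qed.

End Thresholds.

Section PairsFiringTogether.

Variables (n : nat) (V : finType) (B : V -> {set 'I_n}) (w : 'I_n -> V -> int).
Variable k : nat.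
Hypothesis leqkn : (k <= n)%N.

Local Notation rho := (k%:R / n%:R : rat).
Local Notation both_fire u v :=
  (fun S => (yv B w S u == 1) && (yv B w S v == 1)).

(* Part (a) before arithmetic: a common +1 neighbour a forces both nodes to
   fire unless another neighbour of u or v joins a in S. *)
Lemma related_pair_prob (u v : V) (a : 'I_n) :
  a \in Bplus B w u -> a \in Bplus B w v ->
  rho <= probk k (both_fire u v) + #|(B u :|: B v) :\ a|%:R * rho ^+ 2.
Proof.
move=> a_u a_v; set D := (B u :|: B v) :\ a.
pose pair_in (S : {set 'I_n}) := [exists b in D, (a \in S) && (b \in S)].
have a_covered : probk k (fun S => a \in S) <=
    probk k (fun S => both_fire u v S || pair_in S).
  apply: probk_mono => S _ a_S /=.
  case: (boolP (pair_in S)) => [_|]; first by rewrite orbT.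
  rewrite negb_exists_in => /forall_inP alone; rewrite orbF.
  have lone b : b \in B u :|: B v -> b != a -> b \notin S.
    by move=> b_uv b_ne_a; have := alone b; rewrite a_S; apply; rewrite in_setD1 b_ne_a.
  rewrite (yv_lone_positive a_u a_S) => [|b b_u]; last by apply: lone; rewrite inE b_u.
  rewrite (yv_lone_positive a_v a_S) => [//|b b_v].
  by apply: lone; rewrite inE b_v orbT.
rewrite -{1}(probk_mem leqkn a).
apply: le_trans a_covered (le_trans (probk_or k (both_fire u v) pair_in) _).
rewrite lerD2l; apply: le_trans (probk_exists k D (fun b S => (a \in S) && (b \in S))) _.
rewrite mulr_natl -sumr_const; apply: ler_sum => b; rewrite !inE => /andP[b_ne_a _].
by apply: (probk_mem2 leqkn); rewrite eq_sym.
Qed.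

Hypothesis signed : forall (x : V) (b : 'I_n), b \in B x -> w b x = 1 \/ w b x = -1.

(* Part (b): without common +1 neighbours, firing together needs two
   distinct points of S, one in B+(u) and one in B+(v). *)
Lemma unrelated_pair_prob (u v : V) : Bplus B w u :&: Bplus B w v = set0 ->
  probk k (both_fire u v) <= rho ^+ 2 * #|Bplus B w u|%:R * #|Bplus B w v|%:R.
Proof.
move=> disjoint_plus; set P := setX (Bplus B w u) (Bplus B w v).
pose pair_in (p : 'I_n * 'I_n) (S : {set 'I_n}) := (p.1 \in S) && (p.2 \in S).
have fire_covered :
    probk k (both_fire u v) <= probk k (fun S => [exists p in P, pair_in p S]).
  apply: probk_mono => S _ /andP[/eqP fire_u /eqP fire_v].
  have [a a_u a_S] := yv_positive_witness signed fire_u.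
  have [c c_v c_S] := yv_positive_witness signed fire_v.
  by apply/exists_inP; exists (a, c); rewrite ?in_setX ?a_u ?c_v //= /pair_in a_S c_S.
apply: le_trans fire_covered (le_trans (probk_exists k P pair_in) _).
rewrite -mulrA -natrM -cardsX -/P mulr_natr -sumr_const.
apply: ler_sum => -[a c]; rewrite in_setX => /andP[a_u c_v].
apply: (probk_mem2 leqkn); apply/eqP => /= a_eq_c; subst c.
have : a \in Bplus B w u :&: Bplus B w v by rewrite inE a_u c_v.
by rewrite disjoint_plus inE.
Qed.

End PairsFiringTogether.

Theorem mainTheorem3 (n : nat) (V : finType) (B : V -> {set 'I_n})
  (w : 'I_n -> V -> int) (d k : nat)
  (hw : forall (v : V) (u : 'I_n), u \in B v -> (w u v = 1 \/ w u v = -1))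
  (hd : forall v : V, (#|B v| <= d)%N)
  (hk0 : (0 < k)%N) (hkn : (k <= n)%N)
  (u v : V) (huv : u != v) :
  let rho : rat := k%:R / n%:R in
  let Pr := @probk n k (fun S => (yv B w S u == 1) && (yv B w S v == 1)) in
  (Bplus B w u :&: Bplus B w v != set0 ->
     2 * rho * d%:R <= 1 / 10%:R -> 9%:R / 10%:R * rho <= Pr) /\
  (Bplus B w u :&: Bplus B w v = set0 ->
     Pr <= rho ^+ 2 * (#|Bplus B w u|)%:R * (#|Bplus B w v|)%:R /\
     rho ^+ 2 * (#|Bplus B w u|)%:R * (#|Bplus B w v|)%:R <= (rho * d%:R) ^+ 2).
Proof.
move=> rho Pr; have rho_ge0 : 0 <= rho by rewrite divr_ge0 ?ler0n.
split=> [/set0Pn[a] | disjoint_plus].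
- rewrite inE => /andP[a_u a_v] small_rho.
  have card_D : #|(B u :|: B v) :\ a|%:R <= 2 * d%:R :> rat.
    rewrite -natrM ler_nat mul2n -addnn (leq_trans (subset_leq_card (subsetDl _ _))) //.
    exact: leq_trans (leq_card_setU _ _).1 (leq_add (hd u) (hd v)).
  have := related_pair_prob hkn a_u a_v; rewrite -/rho -/Pr => covered.
  nra.
- split; first exact: (unrelated_pair_prob hkn hw disjoint_plus).
  rewrite [(rho * _) ^+ 2]exprMn -mulrA; apply: ler_wpM2l; first exact: exprn_ge0.
  by rewrite -natrM -natrX ler_nat expnS expn1 leq_mul // (leq_trans (card_Bplus _ _ _)).
Qed.
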